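(* The equation $x+y=z$ with $x,y,z\in\mathcal{B}_{2,1}$ and $x\le y$ has exactly four solutions: $$x=2-\sqrt3=[3,\overline{1,2}],\ y=\tfrac{\sqrt3-1}{2}=[\overline{2,1}],\ z=\tfrac{3-\sqrt3}{2}=[1,1,1,\overline{2,1}];$$ $$x=y=\tfrac{\sqrt3-1}{2}=[\overline{2,1}],\ z=\sqrt3-1=[\overline{1,2}];$$ $$x=y=\tfrac{2-\sqrt2}{2}=[3,\overline{2}],\ z=2-\sqrt2=[1,1,\overline{2}];$$ $$x=\tfrac{2-\sqrt2}{2}=[3,\overline{2}],\ y=\sqrt2-1=[\overline{2}],\ z=\tfrac{\sqrt2}{2}=[1,\overline{2}].$$
   Context: For irrational $x\in(0,1)$, $x=[a_1(x),a_2(x),\dots]$ denotes its simple continued fraction expansion; an overline denotes a periodically repeated block. For a positive integer $B$ and $j\ge0$, $\mathcal{B}_{B,j}$ is the set of irrational $x\in(0,1)$ with $a_k(x)\le B+1$ for all $k\le j$ and $a_k(x)\le B$ for all $k>j$. Thus $\mathcal{B}_{2,1}$ consists of the irrationals $x\in(0,1)$ with $a_1(x)\le3$ and $a_k(x)\le2$ for all $k\ge2$. *)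

From Stdlib Require Import Reals ZArith.
Open Scope R_scope.

Definition floorR (r : R) : Z := Int_part r.

Definition irrational (x : R) : Prop :=
  ~ exists p q : Z, q <> 0%Z /\ x = IZR p / IZR q.

Definition gauss (x : R) : R := / x - IZR (floorR (/ x)).

(* k-th partial quotient a_k(x), for k >= 1: a_k(x) = floor(1 / T^(k-1)(x)) *)
Definition cf_digit (k : nat) (x : R) : Z :=
  floorR (/ (Nat.iter (Nat.pred k) gauss x)).

Definition B_set (B j : nat) (x : R) : Prop :=
  irrational x /\ 0 < x < 1 /\
  (forall k : nat, (1 <= k)%nat -> (k <= j)%nat -> (cf_digit k x <= Z.of_nat B + 1)%Z) /\
  (forall k : nat, (j < k)%nat -> (cf_digit k x <= Z.of_nat B)%Z).

From Stdlib Require Import Reals ZArith Lra Lia Psatz Znumtheory Nsatz.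
Open Scope R_scope.

(* Write x, y, z as 1/(d + w) with d the first partial quotient and w in
   F2 = B_{2,0}, the irrationals with all partial quotients 1 or 2; F2 lies in
   [alpha, beta] = [[2,1,2,1,...], [1,2,1,2,...]].  These bounds leave only the first
   digits (2,2,1), (3,2,1) and (3,3,1); for (2,2,1), and for (3,2,1) when z has second
   digit 1, the equation can only hold at the endpoints alpha and beta.  The remaining
   cases reduce to 1/(1 + 1/(2+s)) + 1/(1 + 1/(2+t)) = 1 + 1/(2+v) with s, t, v in F2.
   In a Moebius coordinate hcoord in which w -> 1/(2+w) is multiplication by
   mu = 2 sqrt 2 - 3 and gamma = [2,2,2,...] sits at 0, this becomes the vanishing of
   a quadratic form Gform.  A first digit 1 would make Gform positive, so s, t, v start
   with 2 and the equation reappears for their Gauss images, with |hcoord| divided by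
   |mu|; hence hcoord vanishes and s = t = v = gamma. *)

Lemma floorR_spec (r : R) : IZR (floorR r) <= r < IZR (floorR r) + 1.
Proof.
  unfold floorR, Int_part. destruct (archimed r) as [Hup Hup1].
  rewrite minus_IZR. lra.
Qed.

Lemma floorR_unique (r : R) (d : Z) : IZR d <= r < IZR d + 1 -> floorR r = d.
Proof.
  intros [Hd Hd1]. unfold floorR, Int_part.
  rewrite <- (tech_up r (d + 1)); [lia | |]; rewrite plus_IZR; lra.
Qed.

Lemma cf_digit_1 (t : R) : cf_digit 1 t = floorR (/ t).
Proof. reflexivity. Qed.

Lemma cf_digit_S (k : nat) (t : R) :
  (1 <= k)%nat -> cf_digit (S k) t = cf_digit k (gauss t).
Proof.
  intros Hk. destruct k as [|k]; [lia|].
  unfold cf_digit. simpl Nat.pred. now rewrite Nat.iter_succ_r.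
Qed.

Lemma gauss_inv_add (d : Z) (w : R) :
  (1 <= d)%Z -> 0 < w < 1 -> floorR (/ / (IZR d + w)) = d /\ gauss (/ (IZR d + w)) = w.
Proof.
  intros Hd Hw. unfold gauss. rewrite Rinv_inv.
  assert (Hfl : floorR (IZR d + w) = d) by (apply floorR_unique; lra).
  rewrite Hfl. split; [reflexivity | ring].
Qed.

Lemma cf_digit_inv_add (d : Z) (w : R) (k : nat) :
  (1 <= d)%Z -> 0 < w < 1 ->
  cf_digit 1 (/ (IZR d + w)) = d /\ cf_digit (S (S k)) (/ (IZR d + w)) = cf_digit (S k) w.
Proof.
  intros Hd Hw. destruct (gauss_inv_add d w Hd Hw) as [Hfl Hg].
  rewrite cf_digit_1, cf_digit_S, Hg by lia. now split.
Qed.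

Lemma irrational_neq0 (w : R) : irrational w -> w <> 0.
Proof. intros Hw ->. apply Hw. exists 0%Z, 1%Z. split; [lia|]. simpl. field. Qed.

Lemma irrational_IZR_add (d : Z) (w : R) : irrational (IZR d + w) <-> irrational w.
Proof.
  split; intros Hw [p [q [Hq Hpq]]]; apply Hw; apply not_0_IZR in Hq as Hq'.
  - exists (d * q + p)%Z, q. split; [exact Hq|].
    rewrite plus_IZR, mult_IZR, Hpq. field. exact Hq'.
  - exists (p - d * q)%Z, q. split; [exact Hq|].
    replace w with (IZR d + w - IZR d) by ring.
    rewrite minus_IZR, mult_IZR, Hpq. field. exact Hq'.
Qed.

Lemma irrational_inv (w : R) : irrational w -> irrational (/ w).
Proof.
  intros Hw [p [q [Hq Hpq]]]. apply Hw.
  assert (Hp : p <> 0%Z).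
  { intros ->. apply (irrational_neq0 w Hw).
    rewrite <- (Rinv_inv w), Hpq. unfold Rdiv. now rewrite Rmult_0_l, Rinv_0. }
  exists q, p. split; [exact Hp|]. apply not_0_IZR in Hq. apply not_0_IZR in Hp.
  rewrite <- (Rinv_inv w), Hpq. field. auto.
Qed.

Lemma sqrt_prime_irrational (k : Z) : prime k -> irrational (sqrt (IZR k)).
Proof.
  intros Hk. assert (Hk1 : (1 < k)%Z) by (destruct Hk; lia).
  (* infinite descent: p^2 = k q^2 forces k | p, then k | q *)
  assert (Hdescent : forall n (p q : Z), (Z.abs_nat q < n)%nat -> q <> 0%Z ->
            (p * p <> k * (q * q))%Z).
  { induction n as [|n IH]; intros p q Hn Hq Hpq; [lia|].
    assert (Hkp : (k | p)%Z).
    { assert (Hpp : (k | p * p)%Z) by (exists (q * q)%Z; lia).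
      now destruct (prime_mult k Hk p p Hpp). }
    destruct Hkp as [p1 ->].
    assert (Hkq : (k | q)%Z).
    { assert (Hqq : (k | q * q)%Z) by (exists (p1 * p1)%Z; nia).
      now destruct (prime_mult k Hk q q Hqq). }
    destruct Hkq as [q1 ->].
    apply (IH p1 q1); [rewrite Zabs2Nat.inj_mul in Hn; nia | lia | nia]. }
  intros [p [q [Hq Hpq]]].
  assert (Hsq : sqrt (IZR k) * sqrt (IZR k) = IZR k) by (apply sqrt_sqrt, IZR_le; lia).
  rewrite Hpq in Hsq. apply not_0_IZR in Hq as Hq'.
  apply (Hdescent (S (Z.abs_nat q)) p q); [lia | exact Hq|].
  apply eq_IZR. rewrite !mult_IZR, <- Hsq. field. exact Hq'.
Qed.

Lemma cf_step (t : R) : irrational t -> 0 < t < 1 ->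
  (1 <= floorR (/ t))%Z /\ irrational (gauss t) /\ 0 < gauss t < 1 /\
  t = / (IZR (floorR (/ t)) + gauss t).
Proof.
  intros Ht Ht01. pose proof (floorR_spec (/ t)) as Hfl.
  assert (Hinv : 1 < / t) by (rewrite <- Rinv_1; apply Rinv_lt_contravar; lra).
  assert (Hsplit : IZR (floorR (/ t)) + gauss t = / t) by (unfold gauss; ring).
  assert (Hg : irrational (gauss t)).
  { apply (irrational_IZR_add (floorR (/ t))). rewrite Hsplit. now apply irrational_inv. }
  pose proof (irrational_neq0 _ Hg).
  split; [|split; [exact Hg | split]].
  - enough (0 < floorR (/ t))%Z by lia. apply lt_IZR. lra.
  - unfold gauss. lra.
  - now rewrite Hsplit, Rinv_inv.
Qed.

Lemma inv_add_in_unit (d : Z) (w : R) : (1 <= d)%Z -> irrational w -> 0 < w < 1 ->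
  irrational (/ (IZR d + w)) /\ 0 < / (IZR d + w) < 1.
Proof.
  intros Hd Hw Hw01. apply IZR_le in Hd.
  split; [now apply irrational_inv, irrational_IZR_add|].
  split; [apply Rinv_0_lt_compat; lra|].
  rewrite <- Rinv_1. apply Rinv_lt_contravar; lra.
Qed.

Lemma B_set_S_split (B j : nat) (x : R) : B_set B (S j) x ->
  exists (d : Z) (w : R), (1 <= d <= Z.of_nat B + 1)%Z /\ B_set B j w /\ x = / (IZR d + w).
Proof.
  intros [Hx [Hx01 [Hlo Hhi]]]. destruct (cf_step x Hx Hx01) as [Hd [Hg [Hg01 Hxe]]].
  exists (floorR (/ x)), (gauss x).
  split; [|split; [split; [exact Hg | split; [exact Hg01 | split]] | exact Hxe]].
  - split; [exact Hd|]. rewrite <- cf_digit_1. apply Hlo; lia.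
  - intros k Hk Hkj. rewrite <- cf_digit_S by exact Hk. apply Hlo; lia.
  - intros k Hk. rewrite <- cf_digit_S by lia. apply Hhi; lia.
Qed.

Lemma B_set_0_split (B : nat) (x : R) : B_set B 0 x ->
  exists (d : Z) (w : R), (1 <= d <= Z.of_nat B)%Z /\ B_set B 0 w /\ x = / (IZR d + w).
Proof.
  intros [Hx [Hx01 [_ Hhi]]]. destruct (cf_step x Hx Hx01) as [Hd [Hg [Hg01 Hxe]]].
  exists (floorR (/ x)), (gauss x).
  split; [|split; [split; [exact Hg | split; [exact Hg01 | split]] | exact Hxe]].
  - split; [exact Hd|]. rewrite <- cf_digit_1. apply Hhi; lia.
  - intros k Hk Hk0. lia.
  - intros k Hk. rewrite <- cf_digit_S by lia. apply Hhi; lia.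
Qed.

Lemma B_set_S_inv_add (B j : nat) (d : Z) (w : R) :
  (1 <= d <= Z.of_nat B + 1)%Z -> B_set B j w -> B_set B (S j) (/ (IZR d + w)).
Proof.
  intros Hd [Hw [Hw01 [Hlo Hhi]]].
  destruct (inv_add_in_unit d w ltac:(lia) Hw Hw01) as [Hx Hx01].
  split; [exact Hx | split; [exact Hx01 | split]].
  - intros [|[|k]] Hk Hkj; [lia | |].
    + now rewrite (proj1 (cf_digit_inv_add d w 0 ltac:(lia) Hw01)).
    + rewrite (proj2 (cf_digit_inv_add d w k ltac:(lia) Hw01)). apply Hlo; lia.
  - intros [|[|k]] Hk; [lia | lia |].
    rewrite (proj2 (cf_digit_inv_add d w k ltac:(lia) Hw01)). apply Hhi; lia.
Qed.

Lemma B_set_0_inv_add (B : nat) (d : Z) (w : R) :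
  (1 <= d <= Z.of_nat B)%Z -> B_set B 0 w -> B_set B 0 (/ (IZR d + w)).
Proof.
  intros Hd [Hw [Hw01 [_ Hhi]]].
  destruct (inv_add_in_unit d w ltac:(lia) Hw Hw01) as [Hx Hx01].
  split; [exact Hx | split; [exact Hx01 | split]].
  - intros k Hk Hk0. lia.
  - intros [|[|k]] Hk; [lia | |].
    + now rewrite (proj1 (cf_digit_inv_add d w 0 ltac:(lia) Hw01)).
    + rewrite (proj2 (cf_digit_inv_add d w k ltac:(lia) Hw01)). apply Hhi; lia.
Qed.

Lemma B_set_S_of (B j : nat) (x : R) : B_set B j x -> B_set B (S j) x.
Proof.
  intros [Hx [Hx01 [Hlo Hhi]]]. split; [exact Hx | split; [exact Hx01 | split]].
  - intros k Hk Hkj. destruct (Nat.eq_dec k (S j)) as [->|Hne].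
    + specialize (Hhi (S j) ltac:(lia)). lia.
    + apply Hlo; lia.
  - intros k Hk. apply Hhi; lia.
Qed.

Lemma B_set_0_of_invariant (B : nat) (P : R -> Prop) :
  (forall t, P t -> irrational t /\ 0 < t < 1 /\
     exists (d : Z) (w : R), (1 <= d <= Z.of_nat B)%Z /\ P w /\ t = / (IZR d + w)) ->
  forall t, P t -> B_set B 0 t.
Proof.
  intros HP t Ht. destruct (HP t Ht) as [Hirr [Ht01 _]].
  split; [exact Hirr | split; [exact Ht01 | split; [intros k Hk Hk0; lia|]]].
  intros [|k] Hk; [lia|]. clear Hk Hirr Ht01. revert t Ht.
  induction k as [|k IH]; intros t Ht;
    destruct (HP t Ht) as [_ [_ [d [w [Hd [Hw ->]]]]]];
    destruct (HP w Hw) as [_ [Hw01 _]].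
  - now rewrite (proj1 (cf_digit_inv_add d w 0 ltac:(lia) Hw01)).
  - rewrite (proj2 (cf_digit_inv_add d w k ltac:(lia) Hw01)). now apply IH.
Qed.

Notation F2 := (B_set 2 0).

Definition alpha : R := (sqrt 3 - 1) / 2.
Definition beta : R := sqrt 3 - 1.
Definition gamma : R := sqrt 2 - 1.

Lemma sqrt3_bounds : sqrt 3 * sqrt 3 = 3 /\ 1.7320508 < sqrt 3 < 1.7320509.
Proof.
  assert (Hsq : sqrt 3 * sqrt 3 = 3) by (apply sqrt_sqrt; lra).
  pose proof (sqrt_pos 3). split; [exact Hsq | split; nra].
Qed.

Lemma sqrt2_bounds : sqrt 2 * sqrt 2 = 2 /\ 1.4142135 < sqrt 2 < 1.4142136.
Proof.
  assert (Hsq : sqrt 2 * sqrt 2 = 2) by (apply sqrt_sqrt; lra).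
  pose proof (sqrt_pos 2). split; [exact Hsq | split; nra].
Qed.

Lemma alpha_beta_bounds : 0.366 < alpha < 0.3661 /\ 0.732 < beta < 0.7321.
Proof. pose proof sqrt3_bounds. unfold alpha, beta. lra. Qed.

Lemma alpha_fix : alpha = / (2 + beta).
Proof. pose proof sqrt3_bounds. apply Rmult_inv_r_uniq; unfold alpha, beta; nra. Qed.

Lemma beta_fix : beta = / (1 + alpha).
Proof. pose proof sqrt3_bounds. apply Rmult_inv_r_uniq; unfold alpha, beta; nra. Qed.

Lemma gamma_fix : gamma = / (2 + gamma).
Proof. pose proof sqrt2_bounds. apply Rmult_inv_r_uniq; unfold gamma; nra. Qed.

(* Both branches w -> 1/(1+w) and w -> 1/(2+w) send a point at distance e outside
   [alpha, beta] to one at distance at most beta * e < 3/4 * e. *)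
Lemma F2_approx (n : nat) : forall t, F2 t -> alpha - (3/4) ^ n <= t <= beta + (3/4) ^ n.
Proof.
  pose proof alpha_fix as Ha. pose proof beta_fix as Hb.
  pose proof alpha_beta_bounds.
  induction n as [|n IH]; intros t Ht.
  - destruct Ht as [_ [Ht01 _]]. simpl. lra.
  - destruct (B_set_0_split 2 t Ht) as [d [w [Hd [Hw ->]]]].
    destruct (IH w Hw) as [Hlo Hhi]. destruct Hw as [_ [Hw01 _]].
    set (e := (3/4) ^ n) in *. assert (He : 0 <= e) by (apply pow_le; lra).
    simpl. fold e. assert (Hd12 : d = 1%Z \/ d = 2%Z) by lia.
    destruct Hd12 as [-> | ->]; simpl IZR.
    + set (T := / (1 + w)). assert (HT : T * (1 + w) = 1) by (unfold T; field; lra).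
      assert (Hdist : T - beta = T * beta * (alpha - w)).
      { rewrite Hb. unfold T. field. split; lra. }
      assert (HTb : 0 <= T * beta <= 3/4) by nra.
      assert (T * beta * (alpha - w) <= 3/4 * e) by nra.
      split; nra.
    + set (T := / (2 + w)). assert (HT : T * (2 + w) = 1) by (unfold T; field; lra).
      assert (Hdist : alpha - T = T * alpha * (w - beta)).
      { rewrite Ha. unfold T. field. split; lra. }
      assert (HTa : 0 <= T * alpha <= 3/4) by nra.
      assert (T * alpha * (w - beta) <= 3/4 * e) by nra.
      split; nra.
Qed.

Lemma pow_lt_eventually (q e : R) : 0 <= q < 1 -> 0 < e -> exists n, q ^ n < e.
Proof.
  intros Hq He. destruct (pow_lt_1_zero q ltac:(rewrite Rabs_pos_eq; lra) e He) as [N HN].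
  exists N. specialize (HN N (le_n N)).
  rewrite Rabs_pos_eq in HN; [exact HN | now apply pow_le].
Qed.

Lemma F2_bounds (t : R) : F2 t -> alpha <= t <= beta.
Proof.
  intros Ht. split.
  - destruct (Rle_or_lt alpha t) as [H | H]; [exact H|].
    destruct (pow_lt_eventually (3/4) (alpha - t)) as [n Hn]; [lra | lra|].
    destruct (F2_approx n t Ht). lra.
  - destruct (Rle_or_lt t beta) as [H | H]; [exact H|].
    destruct (pow_lt_eventually (3/4) (t - beta)) as [n Hn]; [lra | lra|].
    destruct (F2_approx n t Ht). lra.
Qed.

Lemma F2_num (t : R) : F2 t -> 0.3660254 <= t <= 0.7320509.
Proof.
  intros Ht. pose proof sqrt3_bounds. destruct (F2_bounds t Ht). unfold alpha, beta in *. lra.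
Qed.

Lemma F2_inv_1_add (w : R) : F2 w -> 0.5773 <= / (1 + w) <= 0.7321.
Proof.
  intros Hw. pose proof (F2_num w Hw). set (X := / (1 + w)).
  assert (X * (1 + w) = 1) by (unfold X; field; lra). split; nra.
Qed.

Lemma F2_inv_2_add (w : R) : F2 w -> 0.366 <= / (2 + w) <= 0.4227.
Proof.
  intros Hw. pose proof (F2_num w Hw). set (X := / (2 + w)).
  assert (X * (2 + w) = 1) by (unfold X; field; lra). split; nra.
Qed.

Lemma F2_inv_3_add (w : R) : F2 w -> 0.2679 <= / (3 + w) <= 0.2972.
Proof.
  intros Hw. pose proof (F2_num w Hw). set (X := / (3 + w)).
  assert (X * (3 + w) = 1) by (unfold X; field; lra). split; nra.
Qed.

Definition mu : R := 2 * sqrt 2 - 3.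

(* Sends the fixed points gamma and -1 - sqrt 2 of w -> 1/(2+w) to 0 and infinity,
   which turns that map into multiplication by its multiplier mu. *)
Definition hcoord (x : R) : R := (x - gamma) / (x + 1 + sqrt 2).

(* The equation 1/(1+P) + 1/(1+Q) = 1+R in the coordinate hcoord; the parameter l
   absorbs the rescalings by mu. *)
Definition Gform (l a b c : R) : R := a + b + 2 * c + l * (2 * a * b + a * c + b * c).

Lemma mu_bounds : -0.171573 < mu < -0.1715728.
Proof. pose proof sqrt2_bounds. unfold mu. lra. Qed.

Lemma Gform_comm (l a b c : R) : Gform l a b c = Gform l b a c.
Proof. unfold Gform. ring. Qed.

Lemma Gform_scale (l a b c : R) : Gform l (mu * a) (mu * b) (mu * c) = mu * Gform (l * mu) a b c.
Proof. unfold Gform. ring. Qed.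

Lemma Gform_pos_segment (lo hi l a b c : R) : lo <= l <= hi ->
  0 < Gform lo a b c -> 0 < Gform hi a b c -> 0 < Gform l a b c.
Proof.
  intros Hl Hlo Hhi. destruct (Req_dec l hi) as [-> | Hne]; [exact Hhi|].
  assert (Haff : (hi - lo) * Gform l a b c =
    (hi - l) * Gform lo a b c + (l - lo) * Gform hi a b c) by (unfold Gform; ring).
  assert (0 < (hi - l) * Gform lo a b c) by (apply Rmult_lt_0_compat; lra).
  assert (0 <= (l - lo) * Gform hi a b c) by (apply Rmult_le_pos; lra).
  apply (Rmult_lt_reg_l (hi - lo)); lra.
Qed.

Lemma Gform_pos_first (l a b c : R) : -0.1716 <= l <= 0.0295 ->
  0.0545 <= a <= 0.1011 -> -0.01734 <= b <= 0.1011 -> -0.01734 <= c <= 0.1011 ->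
  0 < Gform l a b c.
Proof. intros Hl **. apply (Gform_pos_segment _ _ _ _ _ _ Hl); unfold Gform; nra. Qed.

Lemma Gform_pos_last (l a b c : R) : -0.1716 <= l <= 0.0295 ->
  -0.01734 <= a <= 0.1011 -> -0.01734 <= b <= 0.1011 -> 0.0545 <= c <= 0.1011 ->
  0 < Gform l a b c.
Proof. intros Hl **. apply (Gform_pos_segment _ _ _ _ _ _ Hl); unfold Gform; nra. Qed.

Lemma hcoord_inv_2_add (x : R) : 0 <= x -> hcoord (/ (2 + x)) = mu * hcoord x.
Proof.
  intros Hx. destruct sqrt2_bounds as [Hsq Hs2]. unfold hcoord, mu, gamma.
  field_simplify_eq; [|repeat split; nra].
  replace (sqrt 2 ^ 3) with (2 * sqrt 2) by (simpl; nra).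
  replace (sqrt 2 ^ 2) with 2 by (simpl; nra). ring.
Qed.

Lemma hcoord_mul_den (x : R) : 0 <= x -> hcoord x * (x + 1 + sqrt 2) = x - gamma.
Proof. intros Hx. pose proof sqrt2_bounds. unfold hcoord. field. lra. Qed.

Lemma hcoord_eq0 (x : R) : 0 <= x -> hcoord x = 0 -> x = gamma.
Proof. intros Hx Hh. pose proof (hcoord_mul_den x Hx) as Hd. rewrite Hh in Hd. lra. Qed.

Lemma hcoord_F2 (p : R) : F2 p -> -0.01734 <= hcoord p <= 0.1011.
Proof.
  intros Hp. pose proof (F2_num p Hp). pose proof sqrt2_bounds.
  pose proof (hcoord_mul_den p ltac:(lra)). unfold gamma in *. split; nra.
Qed.

Lemma hcoord_F2_digit1 (p : R) : F2 p -> 0.0545 <= hcoord (/ (1 + p)).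
Proof.
  intros Hp. pose proof (F2_inv_1_add p Hp). pose proof sqrt2_bounds.
  pose proof (hcoord_mul_den (/ (1 + p)) ltac:(lra)). unfold gamma in *. nra.
Qed.

Lemma Gform_of_sum (P Q R : R) : 0 < P -> 0 < Q -> 0 < R ->
  / (1 + P) + / (1 + Q) = 1 + R -> Gform 1 (hcoord P) (hcoord Q) (hcoord R) = 0.
Proof.
  intros HP HQ HR Hsum. destruct sqrt2_bounds as [Hsq Hs2].
  assert (Hpoly : (1 + Q) + (1 + P) = (1 + R) * (1 + P) * (1 + Q)).
  { rewrite <- Hsum. field. lra. }
  assert (Hcleared : forall r, r * r = 2 ->
    (P - (r - 1)) * (Q + 1 + r) * (R + 1 + r) + (P + 1 + r) * (Q - (r - 1)) * (R + 1 + r)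
    + 2 * (P + 1 + r) * (Q + 1 + r) * (R - (r - 1))
    + 2 * (P - (r - 1)) * (Q - (r - 1)) * (R + 1 + r)
    + (P - (r - 1)) * (Q + 1 + r) * (R - (r - 1))
    + (P + 1 + r) * (Q - (r - 1)) * (R - (r - 1)) = 0).
  { intros r Hr. clear - Hpoly Hr. nsatz. }
  specialize (Hcleared (sqrt 2) Hsq).
  unfold Gform, hcoord, gamma.
  apply (Rmult_eq_reg_r ((P + 1 + sqrt 2) * (Q + 1 + sqrt 2) * (R + 1 + sqrt 2))).
  - rewrite Rmult_0_l, <- Hcleared. field. repeat split; lra.
  - repeat apply Rmult_integral_contrapositive_currified; lra.
Qed.

Lemma F2_hcoord_cases (p : R) : F2 p ->
  0.0545 <= hcoord p \/ exists p', F2 p' /\ hcoord p = mu * hcoord p'.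
Proof.
  intros Hp. destruct (B_set_0_split 2 p Hp) as [d [w [Hd [Hw ->]]]].
  assert (Hd12 : d = 1%Z \/ d = 2%Z) by lia.
  destruct Hd12 as [-> | ->]; simpl IZR; [left; now apply hcoord_F2_digit1 | right].
  exists w. split; [exact Hw|]. apply hcoord_inv_2_add. pose proof (F2_num w Hw). lra.
Qed.

Lemma Gform_step (l p q r : R) : -0.1716 <= l <= 0.0295 -> F2 p -> F2 q -> F2 r ->
  Gform l (hcoord p) (hcoord q) (hcoord r) = 0 ->
  exists p' q' r', F2 p' /\ F2 q' /\ F2 r' /\
    hcoord p = mu * hcoord p' /\ hcoord q = mu * hcoord q' /\ hcoord r = mu * hcoord r' /\
    Gform (l * mu) (hcoord p') (hcoord q') (hcoord r') = 0.
Proof.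
  intros Hl Hp Hq Hr HG.
  pose proof (hcoord_F2 p Hp). pose proof (hcoord_F2 q Hq). pose proof (hcoord_F2 r Hr).
  destruct (F2_hcoord_cases p Hp) as [Hp1 | [p' [Hp' Ep]]].
  { pose proof (Gform_pos_first l (hcoord p) (hcoord q) (hcoord r) Hl). lra. }
  destruct (F2_hcoord_cases q Hq) as [Hq1 | [q' [Hq' Eq]]].
  { rewrite Gform_comm in HG.
    pose proof (Gform_pos_first l (hcoord q) (hcoord p) (hcoord r) Hl). lra. }
  destruct (F2_hcoord_cases r Hr) as [Hr1 | [r' [Hr' Er]]].
  { pose proof (Gform_pos_last l (hcoord p) (hcoord q) (hcoord r) Hl). lra. }
  exists p', q', r'. do 6 (split; [assumption|]).
  rewrite Ep, Eq, Er, Gform_scale in HG. pose proof mu_bounds.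
  apply Rmult_integral in HG as [Hmu | HG]; [lra | exact HG].
Qed.

Lemma Gform_descent (n : nat) : forall l p q r, -0.1716 <= l <= 0.0295 ->
  F2 p -> F2 q -> F2 r -> Gform l (hcoord p) (hcoord q) (hcoord r) = 0 ->
  Rabs (hcoord p) <= 0.1011 * Rabs mu ^ n /\ Rabs (hcoord q) <= 0.1011 * Rabs mu ^ n /\
  Rabs (hcoord r) <= 0.1011 * Rabs mu ^ n.
Proof.
  induction n as [|n IH]; intros l p q r Hl Hp Hq Hr HG.
  - pose proof (hcoord_F2 p Hp). pose proof (hcoord_F2 q Hq). pose proof (hcoord_F2 r Hr).
    simpl. repeat split; apply Rabs_le; lra.
  - destruct (Gform_step l p q r Hl Hp Hq Hr HG)
      as [p' [q' [r' [Hp' [Hq' [Hr' [-> [-> [-> HG']]]]]]]]].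
    pose proof mu_bounds.
    assert (Hl' : -0.1716 <= l * mu <= 0.0295) by (split; nra).
    destruct (IH _ _ _ _ Hl' Hp' Hq' Hr' HG') as [Bp [Bq Br]].
    rewrite !Rabs_mult. simpl. pose proof (Rabs_pos mu).
    repeat split; nra.
Qed.

Lemma geometric_bound_eq0 (x c q : R) : 0 <= q < 1 -> (forall n, Rabs x <= c * q ^ n) -> x = 0.
Proof.
  intros Hq Hx. destruct (Req_dec x 0) as [|Hne]; [assumption | exfalso].
  pose proof (Rabs_pos_lt x Hne). pose proof (Rabs_pos c). pose proof (Rle_abs c).
  destruct (pow_lt_eventually q (Rabs x / (Rabs c + 1)) Hq) as [N HN].
  { apply Rdiv_lt_0_compat; lra. }
  specialize (Hx N). pose proof (pow_le q N (proj1 Hq)).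
  apply (Rmult_lt_compat_l (Rabs c + 1)) in HN; [|lra].
  replace ((Rabs c + 1) * (Rabs x / (Rabs c + 1))) with (Rabs x) in HN by (field; lra).
  nra.
Qed.

Lemma Gform_zero (l p q r : R) : -0.1716 <= l <= 0.0295 -> F2 p -> F2 q -> F2 r ->
  Gform l (hcoord p) (hcoord q) (hcoord r) = 0 -> p = gamma /\ q = gamma /\ r = gamma.
Proof.
  intros Hl Hp Hq Hr HG. pose proof mu_bounds.
  assert (Hmu : 0 <= Rabs mu < 1) by (rewrite Rabs_left; lra).
  pose proof (fun n => Gform_descent n l p q r Hl Hp Hq Hr HG) as Hdesc.
  pose proof (F2_num p Hp). pose proof (F2_num q Hq). pose proof (F2_num r Hr).
  repeat split; apply hcoord_eq0; try lra; apply (geometric_bound_eq0 _ 0.1011 (Rabs mu) Hmu);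
    intros n; apply Hdesc.
Qed.

Lemma gamma_unique (s t v : R) : F2 s -> F2 t -> F2 v ->
  / (1 + / (2 + s)) + / (1 + / (2 + t)) = 1 + / (2 + v) ->
  s = gamma /\ t = gamma /\ v = gamma.
Proof.
  intros Hs Ht Hv Hsum.
  pose proof (F2_inv_2_add s Hs). pose proof (F2_inv_2_add t Ht). pose proof (F2_inv_2_add v Hv).
  pose proof (F2_num s Hs). pose proof (F2_num t Ht). pose proof (F2_num v Hv).
  pose proof (Gform_of_sum (/ (2 + s)) (/ (2 + t)) (/ (2 + v))
    ltac:(lra) ltac:(lra) ltac:(lra) Hsum) as HG.
  rewrite !hcoord_inv_2_add, Gform_scale in HG by lra. pose proof mu_bounds.
  apply Rmult_integral in HG as [Hmu | HG]; [lra|].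
  apply (Gform_zero (1 * mu)); auto. lra.
Qed.

Lemma inv_3_add_beta : / (3 + beta) = 2 - sqrt 3.
Proof.
  pose proof sqrt3_bounds. symmetry. apply Rmult_inv_r_uniq; unfold beta; nra.
Qed.

Lemma inv_1_inv_1_add_beta : / (1 + / (1 + beta)) = (3 - sqrt 3) / 2.
Proof.
  pose proof sqrt3_bounds. pose proof alpha_beta_bounds.
  assert (/ (1 + beta) * sqrt 3 = 1) by (unfold beta; field; lra).
  symmetry. apply Rmult_inv_r_uniq; [|nra].
  pose proof (Rinv_0_lt_compat (1 + beta) ltac:(lra)). lra.
Qed.

Lemma inv_3_add_gamma : / (3 + gamma) = (2 - sqrt 2) / 2.
Proof.
  pose proof sqrt2_bounds. symmetry. apply Rmult_inv_r_uniq; unfold gamma; nra.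
Qed.

Lemma inv_1_add_gamma : / (1 + gamma) = sqrt 2 / 2.
Proof.
  pose proof sqrt2_bounds. symmetry. apply Rmult_inv_r_uniq; unfold gamma; nra.
Qed.

Lemma inv_1_inv_1_add_gamma : / (1 + / (1 + gamma)) = 2 - sqrt 2.
Proof.
  pose proof sqrt2_bounds. rewrite inv_1_add_gamma. symmetry. apply Rmult_inv_r_uniq; nra.
Qed.

Lemma F2_inv_add_extremes (d w : R) : 1 <= d -> F2 w ->
  / (d + beta) <= / (d + w) <= / (d + alpha).
Proof.
  intros Hd Hw. pose proof (F2_bounds w Hw). pose proof alpha_beta_bounds.
  split; apply Rinv_le_contravar; lra.
Qed.

Lemma sum_first_digits_2_2 (s t u : R) : F2 s -> F2 t -> F2 u ->
  / (2 + s) + / (2 + t) = / (1 + u) -> / (2 + s) = alpha /\ / (2 + t) = alpha /\ / (1 + u) = beta.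
Proof.
  intros Hs Ht Hu Hsum.
  pose proof (F2_inv_add_extremes 2 s ltac:(lra) Hs).
  pose proof (F2_inv_add_extremes 2 t ltac:(lra) Ht).
  pose proof (F2_inv_add_extremes 1 u ltac:(lra) Hu).
  rewrite <- alpha_fix, <- beta_fix in *.
  assert (beta = 2 * alpha) by (unfold alpha, beta; field).
  lra.
Qed.

Lemma sum_first_digits_3_2 (s t u : R) : F2 s -> F2 t -> F2 u ->
  / (3 + s) + / (2 + t) = / (1 + u) ->
  (/ (3 + s) = 2 - sqrt 3 /\ / (2 + t) = alpha /\ / (1 + u) = (3 - sqrt 3) / 2) \/
  (/ (3 + s) = (2 - sqrt 2) / 2 /\ / (2 + t) = gamma /\ / (1 + u) = sqrt 2 / 2).
Proof.
  intros Hs Ht Hu Hsum. destruct (B_set_0_split 2 u Hu) as [d [v [Hd [Hv ->]]]].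
  pose proof (F2_num s Hs). pose proof (F2_num v Hv).
  assert (Hd12 : d = 1%Z \/ d = 2%Z) by lia.
  destruct Hd12 as [-> | ->]; simpl IZR in *; [left | right].
  - pose proof (F2_inv_add_extremes 3 s ltac:(lra) Hs).
    pose proof (F2_inv_add_extremes 2 t ltac:(lra) Ht).
    pose proof (F2_inv_add_extremes 1 v ltac:(lra) Hv).
    assert (/ (1 + / (1 + v)) <= / (1 + / (1 + beta))).
    { apply Rinv_le_contravar; [|lra].
      pose proof alpha_beta_bounds. pose proof (Rinv_0_lt_compat (1 + beta) ltac:(lra)).
      lra. }
    rewrite <- alpha_fix, inv_3_add_beta in *. rewrite inv_1_inv_1_add_beta in *.
    unfold alpha in *. lra.
  - assert (Hx : / (3 + s) = 1 - / (1 + / (2 + s))) by (field; split; lra).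
    rewrite Hx in Hsum.
    destruct (gamma_unique s v t Hs Hv Ht ltac:(lra)) as [-> [-> ->]].
    rewrite <- gamma_fix, inv_3_add_gamma, inv_1_add_gamma. now repeat split.
Qed.

Lemma sum_first_digits_3_3 (s t u : R) : F2 s -> F2 t -> F2 u ->
  / (3 + s) + / (3 + t) = / (1 + u) ->
  / (3 + s) = (2 - sqrt 2) / 2 /\ / (3 + t) = (2 - sqrt 2) / 2 /\ / (1 + u) = 2 - sqrt 2.
Proof.
  intros Hs Ht Hu Hsum. destruct (B_set_0_split 2 u Hu) as [d [v [Hd [Hv ->]]]].
  pose proof (F2_num s Hs). pose proof (F2_num t Ht). pose proof (F2_num v Hv).
  assert (Hd12 : d = 1%Z \/ d = 2%Z) by lia.
  destruct Hd12 as [-> | ->]; simpl IZR in *.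
  - assert (/ (3 + s) = 1 - / (1 + / (2 + s))) by (field; split; lra).
    assert (/ (3 + t) = 1 - / (1 + / (2 + t))) by (field; split; lra).
    assert (/ (1 + / (1 + v)) = 1 - / (2 + v)) by (field; split; lra).
    destruct (gamma_unique s t v Hs Ht Hv ltac:(lra)) as [-> [-> ->]].
    rewrite inv_3_add_gamma, inv_1_inv_1_add_gamma. now repeat split.
  - exfalso.
    pose proof (F2_inv_3_add s Hs). pose proof (F2_inv_3_add t Ht).
    pose proof (F2_inv_2_add v Hv).
    set (Y := / (2 + v)) in *.
    assert (/ (1 + Y) * (1 + Y) = 1) by (field; lra). nra.
Qed.

Lemma B21_split (x : R) : B_set 2 1 x ->
  exists w, F2 w /\
    ((x = / (1 + w) /\ 0.5773 <= x <= 0.7321) \/ (x = / (2 + w) /\ 0.366 <= x <= 0.4227) \/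
     (x = / (3 + w) /\ 0.2679 <= x <= 0.2972)).
Proof.
  intros Hx. destruct (B_set_S_split 2 0 x Hx) as [d [w [Hd [Hw ->]]]].
  exists w. split; [exact Hw|].
  assert (Hd123 : d = 1%Z \/ d = 2%Z \/ d = 3%Z) by lia.
  destruct Hd123 as [-> | [-> | ->]]; simpl IZR.
  - left. split; [reflexivity | exact (F2_inv_1_add w Hw)].
  - right; left. split; [reflexivity | exact (F2_inv_2_add w Hw)].
  - right; right. split; [reflexivity | exact (F2_inv_3_add w Hw)].
Qed.

Lemma B21_sum_solutions (x y z : R) : B_set 2 1 x -> B_set 2 1 y -> B_set 2 1 z ->
  x <= y -> x + y = z ->
  (x = 2 - sqrt 3 /\ y = (sqrt 3 - 1) / 2 /\ z = (3 - sqrt 3) / 2) \/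
  (x = (sqrt 3 - 1) / 2 /\ y = (sqrt 3 - 1) / 2 /\ z = sqrt 3 - 1) \/
  (x = (2 - sqrt 2) / 2 /\ y = (2 - sqrt 2) / 2 /\ z = 2 - sqrt 2) \/
  (x = (2 - sqrt 2) / 2 /\ y = sqrt 2 - 1 /\ z = sqrt 2 / 2).
Proof.
  intros Hx Hy Hz Hxy Hsum.
  destruct (B21_split x Hx) as [s [Hs Hxs]], (B21_split y Hy) as [t [Ht Hyt]],
    (B21_split z Hz) as [u [Hu Hzu]].
  (* the interval bounds leave only the first digits (2,2,1), (3,2,1) and (3,3,1) *)
  destruct Hxs as [[-> Hxb] | [[-> Hxb] | [-> Hxb]]];
  destruct Hyt as [[-> Hyb] | [[-> Hyb] | [-> Hyb]]];
  destruct Hzu as [[-> Hzb] | [[-> Hzb] | [-> Hzb]]];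
  try (exfalso; clear - Hxy Hsum Hxb Hyb Hzb; lra).
  - right; left. now destruct (sum_first_digits_2_2 s t u Hs Ht Hu Hsum) as [-> [-> ->]].
  - destruct (sum_first_digits_3_2 s t u Hs Ht Hu Hsum) as [Hsol | Hsol];
      [left | right; right; right]; exact Hsol.
  - right; right; left. exact (sum_first_digits_3_3 s t u Hs Ht Hu Hsum).
Qed.

Lemma alpha_beta_F2 : F2 alpha /\ F2 beta.
Proof.
  assert (Hbeta : irrational beta).
  { unfold beta. replace (sqrt 3 - 1) with (IZR (-1) + sqrt 3) by (simpl; ring).
    apply irrational_IZR_add, (sqrt_prime_irrational 3), prime_3. }
  assert (Halpha : irrational alpha).
  { rewrite alpha_fix. apply irrational_inv, (irrational_IZR_add 2), Hbeta. }
  pose proof alpha_beta_bounds.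
  assert (Hinv : forall t, t = alpha \/ t = beta -> B_set 2 0 t).
  { apply B_set_0_of_invariant. intros t [-> | ->].
    - split; [exact Halpha | split; [lra|]].
      exists 2%Z, beta. split; [simpl; lia|]. split; [now right | exact alpha_fix].
    - split; [exact Hbeta | split; [lra|]].
      exists 1%Z, alpha. split; [simpl; lia|]. split; [now left | exact beta_fix]. }
  split; apply Hinv; auto.
Qed.

Lemma gamma_F2 : F2 gamma.
Proof.
  assert (Hgamma : irrational gamma).
  { unfold gamma. replace (sqrt 2 - 1) with (IZR (-1) + sqrt 2) by (simpl; ring).
    apply irrational_IZR_add, (sqrt_prime_irrational 2), prime_2. }
  apply (B_set_0_of_invariant 2 (fun t => t = gamma)); [|reflexivity].
  intros t ->. pose proof sqrt2_bounds. split; [exact Hgamma | split; [unfold gamma; lra|]].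
  exists 2%Z, gamma. split; [simpl; lia|]. split; [reflexivity | exact gamma_fix].
Qed.

Theorem mainTheorem7 : forall x y z : R,
  (B_set 2 1 x /\ B_set 2 1 y /\ B_set 2 1 z /\ x <= y /\ x + y = z) <->
  ((x = 2 - sqrt 3 /\ y = (sqrt 3 - 1) / 2 /\ z = (3 - sqrt 3) / 2) \/
   (x = (sqrt 3 - 1) / 2 /\ y = (sqrt 3 - 1) / 2 /\ z = sqrt 3 - 1) \/
   (x = (2 - sqrt 2) / 2 /\ y = (2 - sqrt 2) / 2 /\ z = 2 - sqrt 2) \/
   (x = (2 - sqrt 2) / 2 /\ y = sqrt 2 - 1 /\ z = sqrt 2 / 2)).
Proof.
  intros x y z. split.
  - intros [Hx [Hy [Hz [Hxy Hsum]]]]. exact (B21_sum_solutions x y z Hx Hy Hz Hxy Hsum).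
  - assert (Hd1 : (1 <= 1 <= Z.of_nat 2)%Z) by (simpl; lia).
    assert (Hd1' : (1 <= 1 <= Z.of_nat 2 + 1)%Z) by (simpl; lia).
    assert (Hd3 : (1 <= 3 <= Z.of_nat 2 + 1)%Z) by (simpl; lia).
    destruct alpha_beta_F2 as [Halpha Hbeta]. pose proof gamma_F2 as Hgamma.
    pose proof (B_set_S_inv_add 2 0 3 beta Hd3 Hbeta) as Hx1.
    pose proof (B_set_S_inv_add 2 0 1 _ Hd1' (B_set_0_inv_add 2 1 beta Hd1 Hbeta)) as Hz1.
    pose proof (B_set_S_inv_add 2 0 3 gamma Hd3 Hgamma) as Hx34.
    pose proof (B_set_S_inv_add 2 0 1 _ Hd1' (B_set_0_inv_add 2 1 gamma Hd1 Hgamma)) as Hz3.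
    pose proof (B_set_S_inv_add 2 0 1 gamma Hd1' Hgamma) as Hz4.
    rewrite inv_3_add_beta in Hx1. rewrite inv_1_inv_1_add_beta in Hz1.
    rewrite inv_3_add_gamma in Hx34. rewrite inv_1_inv_1_add_gamma in Hz3.
    rewrite inv_1_add_gamma in Hz4.
    apply B_set_S_of in Halpha, Hbeta, Hgamma. unfold alpha, beta, gamma in *.
    pose proof sqrt3_bounds. pose proof sqrt2_bounds.
    intros [[-> [-> ->]] | [[-> [-> ->]] | [[-> [-> ->]] | [-> [-> ->]]]]];
      (split; [assumption | split; [assumption | split; [assumption | split; lra]]]).
Qed.
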